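(* Let $\Omega$ be a bounded domain in $\mathbb{R}^n$ (or $\mathbb{C}^n$), let $x\in\overline\Omega$, and let $\mathcal{E}$ be a closed subspace of $\mathcal{C}(\overline\Omega)$ (with the sup-norm). Suppose there exist constants $0<\alpha<1$, $0<s\leq 1$, $0<t<1$, $0<A<1$ and $C>0$ such that for each neighbourhood $U$ of $x$ (in $\overline\Omega$) with $\mathrm{r}_x(U)<1$, there exists a function $f_U\in\mathcal{E}$ with the properties 1) $f_U(x)=1$; 2) $|f_U(y)|\leq\alpha$ for all $y\in\overline\Omega\setminus U$; 3) $|f_U(y)|\leq C\,\big(\log[1/\mathrm{r}_x(U)]\big)^t$ for all $y\in U$; and 4) $\{y\in\overline\Omega : |f_U(y)|<1+\varepsilon^s\}\supset B(x;A\,\mathrm{r}_x(U)\,\varepsilon)$ for every $0<\varepsilon<1$. Then there exists a function $F\in\mathcal{E}$ which peaks at $x$.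
   Context: $\mathcal{C}(\overline\Omega)$ denotes the space of all complex-valued continuous functions on $\overline\Omega$. For a set $U$ containing $x$, $\mathrm{r}_x(U):=\sup_{y\in U}|y-x|$, where $|\cdot|$ is the Euclidean norm. For $y\in\overline\Omega$ and $r>0$, $B(y;r):=\overline\Omega\cap\mathbb{B}(y;r)$, where $\mathbb{B}(y;r)$ is the open Euclidean ball of center $y$ and radius $r$. A function $f\in\mathcal{E}$ is said to peak at $x$ if $f(x)=1$ and $|f(y)|<1$ for all $y\in\overline\Omega\setminus\{x\}$. *)

From HB Require Import structures.
From mathcomp Require Import all_boot all_order all_algebra.
From mathcomp Require Import all_classical all_reals all_analysis.
From mathcomp.real_closed Require Import complex.
Set Implicit Arguments. Unset Strict Implicit. Unset Printing Implicit Defensive.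
Import Order.TTheory GRing.Theory Num.Theory.
Import numFieldTopology.Exports numFieldNormedType.Exports.
Local Open Scope classical_set_scope.
Local Open Scope ring_scope.

Definition eucl_norm {R : realType} {n : nat} (v : 'rV[R]_n) : R :=
  Num.sqrt (\sum_(i < n) v ord0 i ^+ 2).
Definition eucl_dist {R : realType} {n : nat} (x y : 'rV[R]_n) : R :=
  eucl_norm (x - y).

Definition cmod {R : realType} (z : R[i]) : R := ComplexField.Normc.normc z.

Definition bounded_domain {R : realType} {n : nat} (Om : set 'rV[R]_n) : Prop :=
  [/\ Om !=set0, open Om, connected Om &
      exists M : R, forall y, Om y -> eucl_norm y <= M].

Definition cont_on {R : realType} {n : nat} (K : set 'rV[R]_n)
  (f : 'rV[R]_n -> R[i]) : Prop :=
  forall x, K x -> forall e : R, 0 < e -> exists2 d : R, 0 < d &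
    forall y, K y -> eucl_dist y x < d -> cmod (f y - f x) < e.

(* E is a closed (for the sup-norm on K) complex-linear subspace of C(K).
   Functions are total functions R^n -> C, only their values on K matter. *)
Definition closed_subspace_CK {R : realType} {n : nat} (K : set 'rV[R]_n)
  (E : set ('rV[R]_n -> R[i])) : Prop :=
  [/\ (forall f, E f -> cont_on K f),
      E (fun _ => 0),
      (forall f g, E f -> E g -> E (fun y => f y + g y)),
      (forall (c : R[i]) f, E f -> E (fun y => c * f y)) &
      (forall (u : nat -> 'rV[R]_n -> R[i]) (g : 'rV[R]_n -> R[i]),
         (forall k, E (u k)) ->
         (forall e : R, 0 < e -> exists N : nat, forall k, (N <= k)%N ->
             forall y, K y -> cmod (u k y - g y) < e) ->
         E g)].

Definition rel_nbhd {R : realType} {n : nat} (K U : set 'rV[R]_n)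
  (x : 'rV[R]_n) : Prop :=
  U `<=` K /\ exists V : set 'rV[R]_n, [/\ open V, V x & K `&` V `<=` U].

Definition rx {R : realType} {n : nat} (x : 'rV[R]_n) (U : set 'rV[R]_n) : R :=
  sup [set eucl_dist y x | y in U].

Definition peaks_at {R : realType} {n : nat} (K : set 'rV[R]_n)
  (f : 'rV[R]_n -> R[i]) (x : 'rV[R]_n) : Prop :=
  f x = 1 /\ forall y, K y -> y <> x -> cmod (f y) < 1.

From HB Require Import structures.
From mathcomp Require Import all_boot all_order all_algebra.
From mathcomp Require Import all_classical all_reals all_analysis.
From mathcomp.real_closed Require Import complex.
From mathcomp Require Import ring lra.
Set Implicit Arguments. Unset Strict Implicit. Unset Printing Implicit Defensive.
Import Order.TTheory GRing.Theory Num.Theory.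
Import numFieldTopology.Exports numFieldNormedType.Exports.
Local Open Scope classical_set_scope.
Local Open Scope complex_scope.
Local Open Scope ring_scope.

(* Choose relative balls U_k around x with radii r_x(U_k) between
   exp (- L_k) and 2 exp (- L_k), where L_k is of order j ln j / s for
   j = k + M, and let f_k be the function that the hypothesis attaches to U_k.
   The peak function is F = sum_k c_k f_k with c_k = M / (j (j + 1)), which sum
   to 1.  As t < 1, condition 3) gives c_k |f_k| <= (1 - alpha) M / (2 (j + 1))
   on U_k; as the radii decay fast, condition 4) gives
   |f_i| <= 1 + (1 - alpha) M / (4 (j + 1)) on U_k for every i < k; and
   |f_k| <= alpha off U_k.  A point y <> x lies in finitely many U_k, and
   splitting the series at the last of them gives |F y| < 1; the same bounds
   make the series converge uniformly. *)

Section ComplexModulus.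
Variable R : realType.
Implicit Types (z w : R[i]) (c : R).

Lemma cmod_ge0 z : 0 <= cmod z.
Proof. by case: z => a b; rewrite /cmod sqrtr_ge0. Qed.

Lemma cmodR c : cmod c%:C = `|c|.
Proof. by rewrite /cmod /= expr0n /= addr0 sqrtr_sqr. Qed.

Lemma cmod_scale c z : 0 <= c -> cmod (c%:C * z) = c * cmod z.
Proof. by move=> c0; rewrite /cmod ComplexField.Normc.normcM -/(cmod _) cmodR ger0_norm. Qed.

Lemma cmodB z w : cmod (z - w) = cmod (w - z).
Proof. by rewrite -opprB /cmod normcN. Qed.

Lemma cmod_sum (I : Type) (r : seq I) (P : pred I) (F : I -> R[i]) :
  cmod (\sum_(i <- r | P i) F i) <= \sum_(i <- r | P i) cmod (F i).
Proof.
apply: (big_ind2 (fun a b => cmod a <= b)) => //.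
- by rewrite /cmod /= expr0n /= addr0 sqrtr0.
- by move=> a1 a2 b1 b2 h1 h2; apply: le_trans (le_normcD _ _) _; exact: lerD.
Qed.

Lemma cmod_Re z : `|complex.Re z| <= cmod z.
Proof. by case: z => a b; rewrite /cmod -sqrtr_sqr ler_wsqrtr // lerDl sqr_ge0. Qed.

Lemma cmod_Im z : `|complex.Im z| <= cmod z.
Proof. by case: z => a b; rewrite /cmod -sqrtr_sqr ler_wsqrtr // lerDr sqr_ge0. Qed.

Lemma cmod_le_ReIm z : cmod z <= `|complex.Re z| + `|complex.Im z|.
Proof.
case: z => a b; rewrite /cmod /=.
rewrite -[X in _ <= X]ger0_norm ?addr_ge0 // -sqrtr_sqr ler_wsqrtr //.
rewrite sqrrD -[a ^+ 2]real_normK ?num_real // -[b ^+ 2]real_normK ?num_real //.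
by rewrite -addrA lerD2l lerDr mulrn_wge0 // mulr_ge0.
Qed.

End ComplexModulus.

Section CauchyLimit.
Variable R : realType.

Lemma dist_sup_shift (a e : nat -> R) :
  (forall N, 0 <= e N) -> (forall N P, (N <= P)%N -> `|a P - a N| <= e N) ->
  forall N, `|a N - sup (range (fun P => a P - e P))| <= e N.
Proof.
move=> e0 cauchy N; set S := range _.
have S_ub : forall P, a P - e P <= a 0%N + e 0%N.
  by move=> P; have := cauchy 0%N P (leq0n P) => /ler_distlDr; have := e0 P; lra.
have hS : has_ubound S by exists (a 0%N + e 0%N) => r [P _ <-].
have S0 : S !=set0 by exists (a 0%N - e 0%N), 0%N.
have lo : a N - e N <= sup S by apply: ub_le_sup => //; exists N.
have hi : sup S <= a N + e N.
  apply: ge_sup => // r [P _ <-]; case: (leqP N P) => NP.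
    by have := cauchy N P NP => /ler_distlDr; have := e0 P; lra.
  by have := cauchy P N (ltnW NP) => /ler_distlCBl; have := e0 N; lra.
by rewrite ler_distl; apply/andP; split; lra.
Qed.

(* The limit of a sequence u with Cauchy modulus e, built coordinatewise from
   suprema since R[i] carries no complete normed structure. *)
Definition climit (u : nat -> R[i]) (e : nat -> R) : R[i] :=
  sup (range (fun P => complex.Re (u P) - e P)) +i*
  sup (range (fun P => complex.Im (u P) - e P)).

Lemma cmod_sub_climit (u : nat -> R[i]) (e : nat -> R) :
  (forall N, 0 <= e N) -> (forall N P, (N <= P)%N -> cmod (u P - u N) <= e N) ->
  forall N, cmod (u N - climit u e) <= 2 * e N.
Proof.
move=> e0 cauchy N; apply: le_trans (cmod_le_ReIm _) _.
have ReB (z w : R[i]) : complex.Re (z - w) = complex.Re z - complex.Re w by case: z; case: w.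
have ImB (z w : R[i]) : complex.Im (z - w) = complex.Im z - complex.Im w by case: z; case: w.
rewrite mulr2n mulrDl mul1r; apply: lerD.
- rewrite ReB; apply: (dist_sup_shift e0) => M P MP.
  by rewrite -ReB; apply: le_trans (cmod_Re _) (cauchy M P MP).
- rewrite ImB; apply: (dist_sup_shift e0) => M P MP.
  by rewrite -ImB; apply: le_trans (cmod_Im _) (cauchy M P MP).
Qed.

End CauchyLimit.

Section Weights.
Context {R : realType} (M : nat).
Hypothesis M_gt0 : (0 < M)%N.

Definition tail (N : nat) : R := M%:R / (N + M)%:R.

(* weight k = M / ((k + M) (k + M + 1)), written so that its sums telescope. *)
Definition weight (k : nat) : R := tail k - tail k.+1.

Lemma tail_gt0 N : 0 < tail N.
Proof. by rewrite divr_gt0 // ltr0n // addn_gt0 M_gt0 orbT. Qed.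

Lemma tail0 : tail 0 = 1.
Proof. by rewrite /tail add0n divff // pnatr_eq0 -lt0n. Qed.

Lemma tail_le N P : (N <= P)%N -> tail P <= tail N.
Proof.
move=> NP; rewrite /tail ler_pM2l ?ltr0n // lef_pV2 ?posrE ?ltr0n ?addn_gt0 ?M_gt0 ?orbT //.
by rewrite ler_nat leq_add2r.
Qed.

Lemma tail_le1 N : tail N <= 1.
Proof. by rewrite -tail0 tail_le. Qed.

Lemma weight_ge0 k : 0 <= weight k.
Proof. by rewrite subr_ge0 tail_le. Qed.

Lemma sum_weight a b : (a <= b)%N -> \sum_(a <= k < b) weight k = tail a - tail b.
Proof.
move=> ab; rewrite -opprB -telescope_sumr // -sumrN.
by apply: eq_bigr => k _; rewrite opprB.
Qed.

Lemma weight_mul k : weight k * (k + M)%:R = tail k.+1.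
Proof.
have j0 : 0 < (k + M)%:R :> R by rewrite ltr0n addn_gt0 M_gt0 orbT.
rewrite /weight /tail addSn -addn1 natrD; field.
by rewrite -natrD; apply/andP; split; apply: lt0r_neq0; lra.
Qed.

Lemma tail_lt eps : 0 < eps -> exists N, forall k, (N <= k)%N -> tail k < eps.
Proof.
move=> eps0; have b0 : 0 <= M%:R / eps by rewrite divr_ge0 // ltW.
exists (Num.Def.archi_bound (M%:R / eps)) => k hk.
have k0 : 0 < (k + M)%:R :> R by rewrite ltr0n addn_gt0 M_gt0 orbT.
rewrite /tail ltr_pdivrMr // mulrC -ltr_pdivrMr //.
apply: lt_le_trans (archi_boundP b0) _.
by rewrite ler_nat; apply: leq_trans hk (leq_addr _ _).
Qed.

Lemma le_of_le_tail (r g b : R) (m : nat) :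
  (forall N, (m <= N)%N -> r <= g + b * tail N) -> r <= g.
Proof.
move=> h; case: (lerP b 0) => [b0|b0].
  by apply: le_trans (h m (leqnn m)) _; rewrite gerDl mulr_le0_ge0 // ltW // tail_gt0.
rewrite leNgt; apply/negP => gr.
have [N hN] : exists N, forall k, (N <= k)%N -> tail k < (r - g) / b.
  by apply: tail_lt; rewrite divr_gt0 // subr_gt0.
have := h (maxn m N) (leq_maxl _ _).
have := hN (maxn m N) (leq_maxr _ _).
by rewrite ltr_pdivlMr // => ht hr; lra.
Qed.

End Weights.

Lemma sum_if_eq_le (R : realType) (r : seq nat) (m : nat) (a : R) :
  0 <= a -> uniq r -> \sum_(k <- r) (if k == m then a else 0) <= a.
Proof.
move=> a0 ur; rewrite -big_mkcond big_const_seq /=.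
have := count_uniq_mem m ur; rewrite /pred1 /= => ->.
by case: (m \in r) => /=; rewrite ?addr0.
Qed.

(* What the sequence (U_k, f_k) must satisfy for sum_k weight k * f_k to peak
   at x; no geometry is involved. *)
Record peak_scheme {R : realType} {T : Type} (K : set T) (x : T) (alpha : R)
    (M : nat) (U : nat -> set T) (f : nat -> T -> R[i]) : Prop := PeakScheme {
  peak_alpha_ge0 : 0 <= alpha;
  peak_alpha_lt1 : alpha < 1;
  peak_M_gt0 : (0 < M)%N;
  peak_at_x : forall k, f k x = 1;
  peak_outside : forall k y, K y -> ~ U k y -> cmod (f k y) <= alpha;
  peak_inside : forall k y, U k y -> cmod (f k y) <= (1 - alpha) * (k + M)%:R / 2;
  peak_before : forall i k y, (i < k)%N -> K y -> U k y ->
    cmod (f i y) <= 1 + (1 - alpha) * tail M k.+1 / 4;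
  peak_finite : forall y, K y -> y <> x -> exists k0, forall k, U k y -> (k < k0)%N }.

Section PeakSeries.
Variables (R : realType) (T : Type) (K : set T) (x : T) (alpha : R) (M : nat).
Variables (U : nat -> set T) (f : nat -> T -> R[i]).
Hypothesis S : peak_scheme K x alpha M U f.

Let M_gt0 : (0 < M)%N := peak_M_gt0 S.
Let tailM_gt0 N : 0 < tail M N :> R. Proof. exact: (tail_gt0 M_gt0 N). Qed.
Let tailM_le1 N : tail M N <= 1 :> R. Proof. exact: (tail_le1 M_gt0 N). Qed.
Let weightM_ge0 k : 0 <= weight M k :> R. Proof. exact: (weight_ge0 M_gt0 k). Qed.

Definition last_visit y m := U m y /\ forall j, (m < j)%N -> ~ U j y.

Lemma last_visit_inj y k m : last_visit y k -> last_visit y m -> k = m.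
Proof.
move=> [Uk lk] [Um lm]; case: (ltngtP k m) => // [km|mk].
- by case: (lk m km).
- by case: (lm k mk).
Qed.

Lemma exists_last_visit y k : K y -> y <> x -> U k y -> exists m, last_visit y m.
Proof.
move=> Ky yx Uk; have [k0 hk0] := peak_finite S Ky yx.
have exP : exists i, `[< U i y >] by exists k; exact: asboolT.
have ubP i : `[< U i y >] -> (i <= k0)%N by move=> /asboolP /hk0 /ltnW.
case: (ex_maxnP exP ubP) => m /asboolP Um hm.
by exists m; split => // j mj /asboolT /hm; rewrite leqNgt mj.
Qed.

Lemma cmod_f_le2 k y : K y -> ~ last_visit y k -> cmod (f k y) <= 2.
Proof.
move=> Ky nlk.
have [Uk|nUk] := pselect (U k y); last first.
  by have := peak_outside S Ky nUk; have := peak_alpha_lt1 S; lra.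
have [j [kj Uj]] : exists j, (k < j)%N /\ U j y.
  apply: contrapT => nj; apply: nlk; split => // j kj Uj; apply: nj; by exists j.
have := peak_before S kj Ky Uj; have := tailM_le1 j.+1; have := tailM_gt0 j.+1.
have := peak_alpha_ge0 S; have := peak_alpha_lt1 S; nra.
Qed.

Lemma weight_cmod_inside k y : U k y ->
  weight M k * cmod (f k y) <= (1 - alpha) * tail M k.+1 / 2.
Proof.
move=> Uk; apply: le_trans (ler_wpM2l (weightM_ge0 k) (peak_inside S Uk)) _.
by rewrite -weight_mul // le_eqVlt; apply/orP; left; apply/eqP; ring.
Qed.

Definition peak_partial N y := \sum_(0 <= k < N) (weight M k)%:C * f k y.

Definition peak_sum y := climit (fun N => peak_partial N y) (fun N => 3 * tail M N).

Lemma cmod_weighted_sum_le y a b (B : R) : (a <= b)%N ->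
  (forall k, (a <= k < b)%N -> cmod (f k y) <= B) ->
  cmod (\sum_(a <= k < b) (weight M k)%:C * f k y) <= (tail M a - tail M b) * B.
Proof.
move=> ab hB; apply: le_trans (cmod_sum _ _ _) _.
rewrite -sum_weight // mulr_suml; apply: ler_sum_nat => k hk.
by rewrite cmod_scale ?weightM_ge0 // ler_wpM2l ?weightM_ge0 ?hB.
Qed.

Lemma peak_partial_cauchy y N P : K y -> (N <= P)%N ->
  cmod (peak_partial P y - peak_partial N y) <= 3 * tail M N.
Proof.
move=> Ky NP.
have -> : peak_partial P y - peak_partial N y =
          \sum_(N <= k < P) (weight M k)%:C * f k y.
  by rewrite /peak_partial (big_cat_nat (leq0n N) NP) /= addrAC subrr add0r.
have small k : ~ last_visit y k -> weight M k * cmod (f k y) <= 2 * weight M k.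
  by move=> nlk; rewrite mulrC ler_wpM2r ?weightM_ge0 ?cmod_f_le2.
(* Only the last visit of y can break |f_k y| <= 2, and its term is <= tail N. *)
have [m hm] : exists m, forall k, (N <= k)%N ->
    weight M k * cmod (f k y) <= 2 * weight M k + (if k == m then tail M N else 0).
  case: (pselect (exists m, last_visit y m)) => [[m lm]|nlv]; last first.
    exists 0%N => k _; apply: le_trans (small _ _) _; first by move=> lk; apply: nlv; exists k.
    by rewrite lerDl; case: eqP => // _; exact: ltW (tailM_gt0 N).
  exists m => k Nk; case: eqP => [km|km]; last first.
    by rewrite addr0 small // => lk; apply: km; exact: last_visit_inj lk lm.
  rewrite {}km in Nk *; apply: ler_wpDl; first by rewrite mulr_ge0.
  apply: le_trans (weight_cmod_inside lm.1) _.
  have := tail_le M_gt0 (leqW Nk) (R := R).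
  have := tailM_gt0 m.+1; have := peak_alpha_ge0 S; have := peak_alpha_lt1 S; nra.
apply: le_trans (cmod_sum _ _ _) _.
apply: (@le_trans _ _ (\sum_(N <= k < P) (2 * weight M k + (if k == m then tail M N else 0)))).
  by apply: ler_sum_nat => k /andP[Nk _]; rewrite cmod_scale ?weightM_ge0 ?hm.
rewrite big_split /= -mulr_sumr sum_weight //.
have := sum_if_eq_le m (ltW (tailM_gt0 N)) (iota_uniq N (P - N)).
have := tailM_gt0 P; rewrite /index_iota; lra.
Qed.

Lemma cmod_sub_peak_sum y N : K y -> cmod (peak_partial N y - peak_sum y) <= 6 * tail M N.
Proof.
move=> Ky; have e0 P : 0 <= 3 * tail M P :> R by rewrite mulr_ge0 ?ltW ?tailM_gt0.
have := cmod_sub_climit e0 (fun N P => peak_partial_cauchy (N := N) (P := P) Ky) N.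
by rewrite /peak_sum; lra.
Qed.

Lemma peak_partial_cvg eps : 0 < eps -> exists N, forall k, (N <= k)%N ->
  forall y, K y -> cmod (peak_partial k y - peak_sum y) < eps.
Proof.
move=> eps0; have [N hN] : exists N, forall k, (N <= k)%N -> tail M k < eps / 6.
  by apply: tail_lt => //; rewrite divr_gt0.
exists N => k Nk y Ky; have := cmod_sub_peak_sum k Ky; have := hN k Nk; lra.
Qed.

Lemma peak_sum_x : K x -> peak_sum x = 1.
Proof.
move=> Kx; have partial_x N : peak_partial N x = (1 - tail M N : R)%:C.
  rewrite /peak_partial; under eq_bigr do rewrite (peak_at_x S) mulr1.
  by rewrite -rmorph_sum sum_weight // tail0.
apply/eqP; rewrite -subr_eq0; apply/eqP/ComplexField.Normc.eq0_normc/le_anti.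
rewrite -/(cmod _) cmod_ge0 andbT; apply: (le_of_le_tail M_gt0 (b := 7) (m := 0)) => N _.
have -> : peak_sum x - 1 = (peak_sum x - peak_partial N x) + (peak_partial N x - 1).
  by rewrite addrA subrK.
apply: le_trans (le_normcD _ _) _.
have -> : peak_partial N x - 1 = (- tail M N : R)%:C.
  by rewrite partial_x rmorphB rmorph1 rmorphN /= addrAC subrr add0r.
rewrite -!/(cmod _) cmodB cmodR normrN ger0_norm; last exact: ltW.
by have := cmod_sub_peak_sum N Kx; lra.
Qed.

Lemma cmod_peak_sum_le y g m : K y ->
  (forall N, (m <= N)%N -> cmod (peak_partial N y) <= g) -> cmod (peak_sum y) <= g.
Proof.
move=> Ky h; apply: (le_of_le_tail M_gt0 (b := 6) (m := m)) => N mN.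
have -> : peak_sum y = peak_partial N y + (peak_sum y - peak_partial N y).
  by rewrite addrC subrK.
apply: le_trans (le_normcD _ _) _; rewrite -!/(cmod _) cmodB.
by apply: lerD; [exact: h | exact: cmod_sub_peak_sum].
Qed.

Lemma cmod_peak_sum_unvisited y : K y -> (forall k, ~ U k y) ->
  cmod (peak_sum y) <= alpha.
Proof.
move=> Ky nU; apply: (cmod_peak_sum_le (m := 0)) => // N _.
apply: le_trans (cmod_weighted_sum_le (B := alpha) (leq0n N) _) _.
  by move=> k _; exact: (peak_outside S).
by rewrite tail0 // ler_piMl ?(peak_alpha_ge0 S) // gerBl ltW ?tailM_gt0.
Qed.

Lemma cmod_peak_partial_visited y m N : K y -> last_visit y m -> (m < N)%N ->
  cmod (peak_partial N y) <= 1 - (1 - alpha) * tail M m.+1 / 4.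
Proof.
move=> Ky [Um lm] mN.
rewrite /peak_partial (big_cat_nat (leq0n m.+1) mN) big_nat_recr //=.
apply: le_trans (le_normcD _ _) _; apply: le_trans (lerD (le_normcD _ _) (lexx _)) _.
have before := cmod_weighted_sum_le (B := 1 + (1 - alpha) * tail M m.+1 / 4) (leq0n m)
  (fun k km => peak_before S (andP km).2 Ky Um).
have visit : cmod ((weight M m)%:C * f m y) <= (1 - alpha) * tail M m.+1 / 2.
  by rewrite cmod_scale ?weightM_ge0 ?weight_cmod_inside.
have after := cmod_weighted_sum_le (B := alpha) mN
  (fun k hk => peak_outside S Ky (lm k (andP hk).1)).
have Tm := tail_le M_gt0 (leqnSn m) (R := R).
have p1 : 0 <= tail M m * ((1 - alpha) * tail M m.+1)
  by rewrite !mulr_ge0 ?subr_ge0 ?(ltW (peak_alpha_lt1 S)) ?(ltW (tailM_gt0 _)).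
have p2 : 0 <= alpha * tail M N by rewrite mulr_ge0 ?(peak_alpha_ge0 S) ?(ltW (tailM_gt0 _)).
rewrite tail0 // in before; rewrite -!/(cmod _); lra.
Qed.

Lemma cmod_peak_sum_lt1 y : K y -> y <> x -> cmod (peak_sum y) < 1.
Proof.
move=> Ky yx; case: (pselect (exists k, U k y)) => [[k Uk]|nU]; last first.
  apply: le_lt_trans (cmod_peak_sum_unvisited Ky _) (peak_alpha_lt1 S).
  by move=> k Uk; apply: nU; exists k.
have [m lm] := exists_last_visit Ky yx Uk.
apply: le_lt_trans (cmod_peak_sum_le (m := m.+1) Ky
  (fun N mN => cmod_peak_partial_visited Ky lm mN)) _.
by rewrite gtrBl divr_gt0 // mulr_gt0 ?tailM_gt0 // subr_gt0 (peak_alpha_lt1 S).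
Qed.

End PeakSeries.

Lemma eventually_xlnx_le_powR (R : realType) (K a p s : R) :
  0 <= K -> 0 < a -> 1 < p -> 0 < s ->
  exists M : nat, (0 < M)%N /\
    forall j : R, M%:R <= j -> j * (K + ln (j + 1)) / s <= (a * j) `^ p.
Proof.
move=> K0 a0 p1 s0.
pose h := (p - 1) / 2; have h0 : 0 < h by rewrite divr_gt0 ?subr_gt0.
have ln2 : 0 <= ln (2 : R) by rewrite ln_ge0 // ler1n.
pose q := s * a `^ p; have q0 : 0 < q by rewrite mulr_gt0 ?powR_gt0.
pose W := K + ln 2 + h^-1.
have W0 : 0 <= W by rewrite /W -addrA addr_ge0 // addr_ge0 // invr_ge0 ltW.
pose Z0 := W / q + 1; have Z0_ge1 : 1 <= Z0 by rewrite lerDr divr_ge0 // ltW.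
have Z0_ge0 : 0 <= Z0 `^ h^-1 by exact: powR_ge0.
exists (maxn 1 (Num.Def.archi_bound (Z0 `^ h^-1))); split; first exact: leq_maxl.
move=> j hj; have j1 : 1 <= j by apply: le_trans hj; rewrite ler1n leq_maxl.
have j0 : 0 < j by lra.
pose Z := j `^ h.
have Z0Z : Z0 <= Z.
  have hZ0 : Z0 `^ h^-1 <= j.
    apply: le_trans hj; apply: le_trans (ltW (archi_boundP Z0_ge0)) _.
    by rewrite ler_nat leq_maxr.
  have := ge0_ler_powR (ltW h0) Z0_ge0 (ltW j0) hZ0.
  by rewrite -powRrM mulVf ?gt_eqF // powRr1 //; lra.
have lnj : ln j < Z / h.
  by rewrite ltr_pdivlMr // mulrC -ln_powR; apply: ln_sublinear; exact: powR_gt0.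
have lnj1 : ln (j + 1) <= ln 2 + ln j.
  by rewrite -lnM ?posrE // ler_ln ?posrE; lra.
have lhs : K + ln (j + 1) <= q * (Z * Z).
  have : K + ln 2 <= (K + ln 2) * Z by rewrite ler_peMr ?addr_ge0 //; lra.
  have : W <= q * (Z - 1) by rewrite /Z0 in Z0Z; rewrite -ler_pdivrMl //; lra.
  rewrite /W; nra.
have -> : (a * j) `^ p = a `^ p * (j * (Z * Z)).
  have hh : p - 1 = h + h by rewrite /h; field.
  rewrite powRM ?(ltW a0) ?(ltW j0) // -(mulr_powRB1 (ltW j0)) ?(lt_trans ltr01 p1) //.
  by rewrite hh powRD //; apply/implyP => _; exact: lt0r_neq0.
rewrite ler_pdivrMr //; apply: le_trans (ler_wpM2l (ltW j0) lhs) _.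
by rewrite /q le_eqVlt; apply/orP; left; apply/eqP; ring.
Qed.

Section Depth.
Context {R : realType}.
Variables (s kap : R) (M : nat).
Hypotheses (s_gt0 : 0 < s) (s_le1 : s <= 1) (kap_gt0 : 0 < kap) (M_gt0 : (0 < M)%N).

(* The k-th neighbourhood will have radius about exp (- depth k). *)
Definition depth (k : nat) : R := (k + M)%:R * (kap + ln ((k + M)%:R + 1)) / s.

Let index_ge1 k : 1 <= (k + M)%:R :> R.
Proof. by rewrite ler1n addn_gt0 M_gt0 orbT. Qed.

Let ln_index_ge0 k : 0 <= ln ((k + M)%:R + 1 : R).
Proof. by rewrite ln_ge0 //; have := index_ge1 k; lra. Qed.

Lemma depth_ge k : kap + ln ((k + M)%:R + 1) <= depth k.
Proof.
have := index_ge1 k; have := ln_index_ge0 k; rewrite /depth ler_pdivlMr //.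
have := ltW kap_gt0; have := s_le1; nra.
Qed.

Lemma depth_ge_lin k : k%:R * kap <= depth k.
Proof.
have kj : k%:R <= (k + M)%:R :> R by rewrite ler_nat leq_addr.
have := ln_index_ge0 k; rewrite /depth ler_pdivlMr //.
have : 0 <= k%:R * kap by rewrite mulr_ge0 // ltW.
have := index_ge1 k; have := ltW kap_gt0; have := s_le1; nra.
Qed.

Lemma depth_step k :
  kap + ln ((k.+1 + M)%:R + 1) <= s * (depth k.+1 - depth k).
Proof.
have -> : s * (depth k.+1 - depth k) = (k.+1 + M)%:R * (kap + ln ((k.+1 + M)%:R + 1))
    - (k + M)%:R * (kap + ln ((k + M)%:R + 1)).
  by rewrite /depth; field; rewrite gt_eqF.
have -> : (k.+1 + M)%:R = (k + M)%:R + 1 :> R by rewrite addSn -addn1 natrD.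
have := index_ge1 k; have := ln_index_ge0 k.
have : ln ((k + M)%:R + 1) <= ln ((k + M)%:R + 1 + 1 : R).
  by rewrite ler_ln ?posrE; have := index_ge1 k; lra.
nra.
Qed.

Lemma depth_le i k : (i <= k)%N -> depth i <= depth k.
Proof.
elim: k => [|k IH]; first by rewrite leqn0 => /eqP ->.
rewrite leq_eqVlt => /orP[/eqP -> //|/IH ik]; apply: le_trans ik _.
have : 0 <= s * (depth k.+1 - depth k).
  by apply: le_trans (depth_step k); have := ln_index_ge0 k.+1; have := kap_gt0; lra.
by rewrite pmulr_rge0 // subr_ge0.
Qed.

Lemma depth_gap i k : (i < k)%N ->
  kap + ln ((k + M)%:R + 1) <= s * (depth k - depth i).
Proof.
case: k => // k ik; apply: le_trans (depth_step k) _.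
by rewrite ler_pM2l // lerD2l lerN2 depth_le.
Qed.

End Depth.

Section EuclideanDistance.
Context {R : realType} {n : nat}.
Implicit Types (x y : 'rV[R]_n) (r : R).

Lemma eucl_dist_ge0 x y : 0 <= eucl_dist x y.
Proof. exact: sqrtr_ge0. Qed.

Lemma eucl_dist_xx x : eucl_dist x x = 0.
Proof.
by rewrite /eucl_dist /eucl_norm big1 ?sqrtr0 // => i _; rewrite !mxE subrr expr0n.
Qed.

Lemma eucl_dist_gt0 x y : y <> x -> 0 < eucl_dist y x.
Proof.
move=> yx; rewrite lt_neqAle eucl_dist_ge0 andbT eq_sym; apply/negP => /eqP.
rewrite /eucl_dist /eucl_norm => /eqP; rewrite sqrtr_eq0 => sum_le0.
have sum0 : \sum_(i < n) (y - x) ord0 i ^+ 2 = 0.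
  by apply/le_anti; rewrite sum_le0 sumr_ge0 // => i _; exact: sqr_ge0.
apply: yx; apply/rowP => i.
have /eqP := psumr_eq0P (fun j _ => sqr_ge0 _) sum0 (i := i) erefl.
by rewrite sqrf_eq0 !mxE subr_eq0 => /eqP.
Qed.

Lemma continuous_eucl_dist x : continuous (fun y => eucl_dist y x).
Proof.
have sq : continuous (fun y : 'rV[R]_n => \sum_(i < n) (y - x) ord0 i ^+ 2).
  apply: continuous_big => [|i _]; first exact: add_continuous.
  pose c (y : 'rV[R]_n) := y ord0 i - x ord0 i.
  have -> : (fun y : 'rV[R]_n => (y - x) ord0 i ^+ 2) = c \* c.
    by apply: funext => y; rewrite /GRing.mul_fun /c !mxE expr2.
  have cc : continuous c.
    by move=> y; apply: continuousB; [exact: coord_continuous | exact: cst_continuous].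
  by move=> y; apply: continuousM; exact: cc.
by move=> y; apply: (continuous_comp (sq y)); exact: sqrt_continuous.
Qed.

Lemma open_eucl_dist_lt x r : open [set y | eucl_dist y x < r].
Proof.
apply: (@open_comp _ _ (eucl_dist^~ x) [set u | u < r]); last exact: open_lt.
by move=> y _; exact: continuous_eucl_dist.
Qed.

Lemma open_eucl_dist_gt x r : open [set y | r < eucl_dist y x].
Proof.
apply: (@open_comp _ _ (eucl_dist^~ x) [set u | r < u]); last exact: open_gt.
by move=> y _; exact: continuous_eucl_dist.
Qed.

Lemma closed_eucl_dist_le x r : closed [set y | eucl_dist y x <= r].
Proof.
apply: (@preimage_closed _ _ (eucl_dist^~ x) [set u | u <= r]); last exact: closed_le.
by move=> y _; exact: continuous_eucl_dist.
Qed.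

End EuclideanDistance.

Section RelativeBalls.
Context {R : realType} {n : nat}.
Variables (Om : set 'rV[R]_n) (x : 'rV[R]_n).
Hypotheses (Om_connected : connected Om) (x_adherent : closure Om x).

(* Otherwise Om `&` [set y | eucl_dist y x < del / 2] would be a nonempty
   proper clopen subset of Om. *)
Lemma exists_eucl_dist_between w del : Om w -> 0 < del <= eucl_dist w x ->
  exists2 z, Om z & del / 2 <= eucl_dist z x < del.
Proof.
move=> Omw /andP[del0 delw]; apply: contrapT => nz.
pose B := Om `&` [set y | eucl_dist y x < del / 2].
have B0 : B !=set0.
  apply: x_adherent; apply: open_nbhs_nbhs; split; first exact: open_eucl_dist_lt.
  by rewrite /= eucl_dist_xx divr_gt0.
have BOm : B = Om.
  apply: Om_connected => //.
    by exists [set y | eucl_dist y x < del / 2] => //; exact: open_eucl_dist_lt.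
  exists [set y | eucl_dist y x <= del / 2]; first exact: closed_eucl_dist_le.
  apply/seteqP; split => y [Omy hy]; split => //=; first exact: ltW.
  rewrite lt_neqAle hy andbT; apply/negP => /eqP hy'.
  by apply: nz; exists y => //; rewrite hy' lexx /=; lra.
have : B w by rewrite BOm.
by case=> _ /=; lra.
Qed.

Lemma exists_rel_nbhd_rx w del : Om w -> 0 < del <= eucl_dist w x ->
  exists U, [/\ rel_nbhd (closure Om) U x, del / 2 <= rx x U <= del &
                forall y, U y -> eucl_dist y x <= rx x U].
Proof.
move=> Omw hdel; have [z Omz /andP[zlo zhi]] := exists_eucl_dist_between Omw hdel.
pose U := closure Om `&` [set y | eucl_dist y x < del].
have U_ub : ubound [set eucl_dist y x | y in U] del by move=> r [y [_ hy] <-]; exact: ltW.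
have le_rx y : U y -> eucl_dist y x <= rx x U.
  by move=> Uy; apply: ub_le_sup; [exists del | exists y].
exists U; split => //.
- split; first by move=> y [].
  exists [set y | eucl_dist y x < del]; split => //; first exact: open_eucl_dist_lt.
  by rewrite /= eucl_dist_xx; case/andP: hdel.
- apply/andP; split.
    by apply: le_trans zlo (le_rx _ _); split => //=; exact: subset_closure.
  apply: ge_sup U_ub; exists (eucl_dist x x), x => //.
  by split => //=; rewrite eucl_dist_xx; case/andP: hdel.
Qed.

End RelativeBalls.

Definition local_peaker {R : realType} {n : nat} (K : set 'rV[R]_n)
    (E : set ('rV[R]_n -> R[i])) (x : 'rV[R]_n) (alpha s t A C : R)
    (U : set 'rV[R]_n) (fU : 'rV[R]_n -> R[i]) : Prop :=
  [/\ E fU, fU x = 1,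
      forall y, K y -> ~ U y -> cmod (fU y) <= alpha,
      forall y, U y -> cmod (fU y) <= C * (ln (1 / rx x U)) `^ t &
      forall eps : R, 0 < eps < 1 -> forall y, K y ->
        eucl_dist y x < A * rx x U * eps -> cmod (fU y) < 1 + eps `^ s].

Section LocalPeaks.
Context {R : realType} {n : nat}.
Variables (K : set 'rV[R]_n) (E : set ('rV[R]_n -> R[i])) (x : 'rV[R]_n).
Variables (alpha s t A C kap : R) (M : nat).
Variables (U : nat -> set 'rV[R]_n) (f : nat -> 'rV[R]_n -> R[i]).
Hypotheses (alpha_ge0 : 0 <= alpha) (alpha_lt1 : alpha < 1).
Hypotheses (s_gt0 : 0 < s) (s_le1 : s <= 1) (t_gt0 : 0 < t).
Hypotheses (A_gt0 : 0 < A) (A_lt1 : A < 1) (C_gt0 : 0 < C) (M_gt0 : (0 < M)%N).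
Hypothesis kap_large : 4 * ln 2 - ln A - ln (1 - alpha) <= kap.
Local Notation La := (depth s kap M).
Hypothesis depth_bound : forall k, C * La k `^ t <= (1 - alpha) * (k + M)%:R / 2.
Hypothesis rx_U : forall k, expR (- La k) <= rx x (U k) <= 2 * expR (- La k).
Hypothesis dist_U : forall k y, U k y -> eucl_dist y x <= rx x (U k).
Hypothesis f_local : forall k, local_peaker K E x alpha s t A C (U k) (f k).

Let ln2_gt0 : 0 < ln (2 : R).
Proof. by rewrite ln_gt0 // ltr1n. Qed.

Let lnA_lt0 : ln A < 0.
Proof. by rewrite ln_lt0 // A_gt0. Qed.

Let lnG_le0 : ln (1 - alpha) <= 0.
Proof. by rewrite ln_le0 // gerBl. Qed.

Let kap_gt0 : 0 < kap.
Proof. by have := kap_large; have := ln2_gt0; have := lnA_lt0; have := lnG_le0; lra. Qed.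

Let depth_ge_kap k : kap <= La k.
Proof.
apply: le_trans (depth_ge s_gt0 s_le1 kap_gt0 M_gt0 k); rewrite lerDl ln_ge0 //.
by rewrite lerDr ler0n.
Qed.

Let rx_U_gt0 k : 0 < rx x (U k).
Proof. by have /andP[lo _] := rx_U k; apply: lt_le_trans (expR_gt0 _) lo. Qed.

Let rx_U_le1 k : rx x (U k) <= 1.
Proof.
have /andP[_ hi] := rx_U k; apply: le_trans hi _.
rewrite expRN ler_pdivrMr ?expR_gt0 // mul1r -[2]lnK ?posrE // ler_expR.
apply: le_trans (depth_ge_kap k); have := kap_large; have := ln2_gt0.
by have := lnA_lt0; have := lnG_le0; lra.
Qed.

Lemma local_f_inside k y : U k y -> cmod (f k y) <= (1 - alpha) * (k + M)%:R / 2.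
Proof.
case: (f_local k) => _ _ _ f_in _ Uy; apply: le_trans (f_in _ Uy) _.
apply: le_trans (depth_bound k); rewrite ler_pM2l //.
have /andP[lo _] := rx_U k.
have ln_ge0 : 0 <= ln (1 / rx x (U k)) by rewrite ln_ge0 // div1r invf_ge1.
have ln_le : ln (1 / rx x (U k)) <= La k.
  by rewrite div1r lnV ?posrE // lerNl -ler_expR lnK ?posrE.
have La_ge0 := le_trans ln_ge0 ln_le.
by apply: (ge0_ler_powR (ltW t_gt0)) ln_le; rewrite nnegrE.
Qed.

Let ln4 : ln (4 : R) = ln 2 + ln 2.
Proof. by rewrite -lnM ?posrE // -natrM. Qed.

Lemma ln_rx_ratio_bound i k : (i < k)%N ->
  s * ln (2 * rx x (U k) / (A * rx x (U i)))
    <= ln (1 - alpha) - ln 4 - ln ((k + M)%:R + 1).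
Proof.
move=> ik; have /andP[lo_i _] := rx_U i; have /andP[_ hi_k] := rx_U k.
have rx_i := rx_U_gt0 i; have rx_k := rx_U_gt0 k.
have ln_i : - La i <= ln (rx x (U i)) by rewrite -ler_expR lnK ?posrE.
have ln_k : ln (rx x (U k)) <= ln 2 - La k.
  by rewrite -ler_expR lnK ?posrE // expRD lnK ?posrE // -expRN.
have ln_ratio : ln (2 * rx x (U k) / (A * rx x (U i)))
    <= ln 2 + ln 2 - ln A - (La k - La i).
  by rewrite ln_div ?posrE ?mulr_gt0 // !lnM ?posrE //; lra.
have := depth_gap s_gt0 kap_gt0 M_gt0 ik.
have : s * (ln 2 + ln 2 - ln A) <= ln 2 + ln 2 - ln A.
  by apply: ler_piMl => //; have := ln2_gt0; have := lnA_lt0; lra.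
have := ler_wpM2l (ltW s_gt0) ln_ratio; have := kap_large; rewrite ln4; lra.
Qed.

Let ln_tail_bound k : ln (1 - alpha) - ln 4 - ln ((k + M)%:R + 1)
  <= ln ((1 - alpha) * tail M k.+1 / 4).
Proof.
pose J : R := (k + M)%:R + 1; have J_gt0 : 0 < J by rewrite /J ltr_wpDl ?ler0n.
have M_ge1 : 1 <= M%:R :> R by rewrite ler1n.
have G_gt0 : 0 < 1 - alpha by rewrite subr_gt0.
have MJ_gt0 : 0 < M%:R / J by rewrite divr_gt0 //; lra.
have GMJ_gt0 : 0 < (1 - alpha) * (M%:R / J) by rewrite mulr_gt0.
have -> : tail M k.+1 = M%:R / J by rewrite /tail /J addSn -addn1 natrD.
rewrite ln_div ?posrE // (@lnM _ (1 - alpha)) ?posrE // ln_div ?posrE ?ltr0n //.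
have : 0 <= ln (M%:R : R) by rewrite ln_ge0.
lra.
Qed.

Lemma local_f_before i k y : (i < k)%N -> K y -> U k y ->
  cmod (f i y) <= 1 + (1 - alpha) * tail M k.+1 / 4.
Proof.
move=> ik Ky Uky; case: (f_local i) => _ _ _ _ f_near.
have rx_i := rx_U_gt0 i; have rx_k := rx_U_gt0 k.
pose eps := 2 * rx x (U k) / (A * rx x (U i)).
have eps_gt0 : 0 < eps by rewrite divr_gt0 ?mulr_gt0.
have s_ln_eps := ln_rx_ratio_bound ik; rewrite -/eps in s_ln_eps.
have eps_lt1 : eps < 1.
  rewrite -ltr_ln ?posrE // ln1 -(pmulr_rlt0 _ s_gt0); apply: le_lt_trans s_ln_eps _.
  have : 0 <= ln ((k + M)%:R + 1 : R) by rewrite ln_ge0 // lerDr ler0n.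
  by have := lnG_le0; have := ln2_gt0; rewrite ln4; lra.
have y_close : eucl_dist y x < A * rx x (U i) * eps.
  have -> : A * rx x (U i) * eps = 2 * rx x (U k) by rewrite /eps; field; rewrite !gt_eqF.
  by apply: le_lt_trans (dist_U Uky) _; lra.
apply: le_trans (ltW (f_near eps _ y Ky y_close)) _; first by rewrite eps_gt0.
have rhs_gt0 : 0 < (1 - alpha) * tail M k.+1 / 4.
  by rewrite divr_gt0 // mulr_gt0 ?subr_gt0 ?tail_gt0.
rewrite lerD2l -ler_ln ?posrE ?powR_gt0 // ln_powR.
exact: le_trans s_ln_eps (ln_tail_bound k).
Qed.

Lemma local_U_finite y : y <> x -> exists k0, forall k, U k y -> (k < k0)%N.
Proof.
move=> yx; have d_gt0 := eucl_dist_gt0 yx; set d := eucl_dist y x in d_gt0 *.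
have b_ge0 : 0 <= 2 / (d * kap) by rewrite divr_ge0 // ltW // mulr_gt0.
exists (Num.Def.archi_bound (2 / (d * kap))) => k Uky; rewrite ltnNge; apply/negP => k_large.
have : 2 < k%:R * (d * kap).
  rewrite -ltr_pdivrMr ?mulr_gt0 //; apply: lt_le_trans (archi_boundP b_ge0) _.
  by rewrite ler_nat.
have /andP[_ hi] := rx_U k; have d_le : d <= 2 * expR (- La k) := le_trans (dist_U Uky) hi.
have : d * expR (La k) <= 2 by move: d_le; rewrite expRN ler_pdivlMr ?expR_gt0.
have := expR_ge1Dx (La k); have := depth_ge_lin s_gt0 s_le1 kap_gt0 M_gt0 k.
have : 0 <= k%:R * kap by rewrite mulr_ge0 // ltW.
nra.
Qed.

Lemma local_peak_scheme : peak_scheme K x alpha M U f.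
Proof.
split => //.
- by move=> k; case: (f_local k).
- by move=> k y Ky; case: (f_local k) => _ _ + _ _; apply.
- exact: local_f_inside.
- exact: local_f_before.
- by move=> y _; exact: local_U_finite.
Qed.

End LocalPeaks.

Lemma closed_subspace_peak_sum {R : realType} {n : nat} (K : set 'rV[R]_n)
    (E : set ('rV[R]_n -> R[i])) (x : 'rV[R]_n) (alpha : R) (M : nat)
    (U : nat -> set 'rV[R]_n) (f : nat -> 'rV[R]_n -> R[i]) :
  closed_subspace_CK K E -> (forall k, E (f k)) -> peak_scheme K x alpha M U f ->
  E (peak_sum M f).
Proof.
case=> _ E0 ED EZ Elim Ef S; apply: (Elim (peak_partial M f)); last first.
  by move=> eps /(peak_partial_cvg S) [N hN]; exists N.
elim=> [|N IH].
  have -> : peak_partial M f 0 = fun=> 0.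
    by apply: funext => y; rewrite /peak_partial big_geq.
  exact: E0.
have -> : peak_partial M f N.+1 =
    (fun y => peak_partial M f N y + (weight M N)%:C * f N y).
  by apply: funext => y; rewrite /peak_partial big_nat_recr.
exact: ED IH (EZ _ _ (Ef N)).
Qed.

(* kap absorbs the constants of ln_rx_ratio_bound and makes the radii
   2 exp (- depth k) at most d0. *)
Lemma exists_depth_parameters {R : realType} (alpha s t A C d0 : R) :
  0 < alpha < 1 -> 0 < s <= 1 -> 0 < t < 1 -> 0 < A < 1 -> 0 < C -> 0 < d0 <= 2^-1 ->
  exists kap M, [/\ 4 * ln 2 - ln A - ln (1 - alpha) <= kap, (0 < M)%N,
    forall k, C * depth s kap M k `^ t <= (1 - alpha) * (k + M)%:R / 2 &
    forall k, 2 * expR (- depth s kap M k) <= d0].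
Proof.
move=> /andP[a0 a1] /andP[s0 s1] /andP[t0 t1] /andP[A0 A1] C0 /andP[d0_gt0 d0_le].
have ln2_gt0 : 0 < ln (2 : R) by rewrite ln_gt0 // ltr1n.
have ln_d0 : ln d0 <= - ln 2 by rewrite -lnV ?posrE // ler_ln ?posrE ?invr_gt0.
have lnA_lt0 : ln A < 0 by rewrite ln_lt0 // A0.
have lnG_le0 : ln (1 - alpha) <= 0 by rewrite ln_le0 // gerBl ltW.
pose kap := 4 * ln 2 - ln A - ln (1 - alpha) - ln d0.
have kap_gt0 : 0 < kap by rewrite /kap; lra.
have a_gt0 : 0 < (1 - alpha) / (2 * C) by rewrite divr_gt0 ?mulr_gt0 ?subr_gt0.
have p_gt1 : 1 < t^-1 by rewrite invf_gt1.
have [M [M_gt0 hM]] := eventually_xlnx_le_powR (ltW kap_gt0) a_gt0 p_gt1 s0.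
have depth_ge_kap k : kap <= depth s kap M k.
  apply: le_trans (depth_ge s0 s1 kap_gt0 M_gt0 k); rewrite lerDl ln_ge0 //.
  by rewrite lerDr ler0n.
exists kap, M; split => // [|k|k]; first by rewrite /kap; lra.
- have hk : depth s kap M k <= ((1 - alpha) / (2 * C) * (k + M)%:R) `^ t^-1.
    by apply: hM; rewrite ler_nat leq_addl.
  have depth_ge0 : depth s kap M k \in Num.nneg.
    by rewrite nnegrE; apply: le_trans (depth_ge_kap k); exact: ltW.
  have := ge0_ler_powR (ltW t0) depth_ge0 _ hk; rewrite nnegrE powR_ge0 => /(_ isT).
  rewrite -powRrM mulVf ?gt_eqF // powRr1; last by rewrite mulr_ge0 // ltW.
  move=> h; apply: le_trans (ler_wpM2l (ltW C0) h) _.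
  by rewrite le_eqVlt; apply/orP; left; apply/eqP; field; rewrite gt_eqF.
- have : expR (- depth s kap M k) <= d0 / 2.
    rewrite -[d0 / 2]lnK ?posrE ?divr_gt0 // ler_expR ln_div ?posrE //.
    by have := depth_ge_kap k; rewrite /kap; lra.
  lra.
Qed.

Lemma exists_peak_sequence {R : realType} {n : nat} (Om : set 'rV[R]_n)
    (E : set ('rV[R]_n -> R[i])) (x w : 'rV[R]_n) (alpha s t A C : R) :
  connected Om -> closure Om x -> Om w -> w <> x ->
  0 < alpha < 1 -> 0 < s <= 1 -> 0 < t < 1 -> 0 < A < 1 -> 0 < C ->
  (forall U, rel_nbhd (closure Om) U x -> rx x U < 1 ->
     exists fU, local_peaker (closure Om) E x alpha s t A C U fU) ->
  exists M U f, (forall k, E (f k)) /\ peak_scheme (closure Om) x alpha M U f.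
Proof.
move=> Om_conn Kx Omw wx alpha01 s01 t01 A01 C0 peaker.
pose d0 := Num.min (eucl_dist w x) 2^-1.
have d0_range : 0 < d0 <= 2^-1.
  by rewrite lt_min (eucl_dist_gt0 wx) /= invr_gt0 ltr0n ge_min lexx orbT.
have [kap [M [kap_large M_gt0 depth_bound depth_small]]] :=
  exists_depth_parameters alpha01 s01 t01 A01 C0 d0_range.
pose La := depth s kap M.
have /choice [Uf hUf] k : exists Uf : set 'rV[R]_n * ('rV[R]_n -> R[i]),
    [/\ expR (- La k) <= rx x Uf.1 <= 2 * expR (- La k),
        forall y, Uf.1 y -> eucl_dist y x <= rx x Uf.1 &
        local_peaker (closure Om) E x alpha s t A C Uf.1 Uf.2].
  have del_pos : 0 < 2 * expR (- La k) <= eucl_dist w x.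
    rewrite mulr_gt0 ?expR_gt0 //=; apply: le_trans (depth_small k) _.
    by rewrite ge_min lexx.
  have [U [nbhd /andP[lo hi] dist_le]] := exists_rel_nbhd_rx Om_conn Kx Omw del_pos.
  have rx_lt1 : rx x U < 1.
    apply: le_lt_trans hi _; apply: le_lt_trans (depth_small k) _.
    case/andP: d0_range => _ /le_lt_trans; apply.
    by rewrite invf_lt1 // ltr1n.
  have [fU hfU] := peaker U nbhd rx_lt1.
  exists (U, fU); split => //; apply/andP; split => //.
  by move: lo; rewrite mulrAC divff ?mul1r.
case/andP: alpha01 => a0 a1; case/andP: s01 => s0 s1; case/andP: t01 => t0 _.
case/andP: A01 => A0 A1.
exists M, (fun k => (Uf k).1), (fun k => (Uf k).2); split.
  by move=> k; case: (hUf k) => _ _ [].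
apply: (local_peak_scheme (E := E) (ltW a0) a1 s0 s1 t0 A0 A1 C0 M_gt0 kap_large
  depth_bound) => k; by case: (hUf k).
Qed.

Lemma closure_sub_set1 {R : realType} {n : nat} (Om : set 'rV[R]_n) (x : 'rV[R]_n) :
  (forall w, Om w -> w = x) -> forall y, closure Om y -> y = x.
Proof.
move=> Om_x y Ky; apply: contrapT => yx.
have d_gt0 := eucl_dist_gt0 yx.
have [z [Omz /=]] : Om `&` [set z | eucl_dist y x / 2 < eucl_dist z x] !=set0.
  apply: Ky; apply: open_nbhs_nbhs; split; first exact: open_eucl_dist_gt.
  by rewrite /=; lra.
by rewrite (Om_x z Omz) eucl_dist_xx; lra.
Qed.

Lemma isolated_rel_nbhd {R : realType} {n : nat} (K : set 'rV[R]_n) (x : 'rV[R]_n) :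
  K x -> (forall y, K y -> y = x) -> rel_nbhd K K x /\ rx x K < 1.
Proof.
move=> Kx K_x; split.
  by split => //; exists setT; split => //; exact: openT.
rewrite /rx; have -> : [set eucl_dist y x | y in K] = [set 0].
  apply/seteqP; split => [r [y Ky <-]|r ->]; first by rewrite (K_x y Ky) eucl_dist_xx.
  by exists x => //; exact: eucl_dist_xx.
by rewrite sup1.
Qed.

Theorem theorem1p1 (R : realType) (n : nat) (Om : set 'rV[R]_n)
  (x : 'rV[R]_n) (E : set ('rV[R]_n -> R[i]))
  (alpha s t A C : R) :
  bounded_domain Om ->
  closure Om x ->
  closed_subspace_CK (closure Om) E ->
  0 < alpha < 1 -> 0 < s <= 1 -> 0 < t < 1 -> 0 < A < 1 -> 0 < C ->
  (forall U : set 'rV[R]_n, rel_nbhd (closure Om) U x -> rx x U < 1 ->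
     exists fU : 'rV[R]_n -> R[i],
       [/\ E fU,
           fU x = 1,
           (forall y, closure Om y -> ~ U y -> cmod (fU y) <= alpha),
           (forall y, U y -> cmod (fU y) <= C * (ln (1 / rx x U)) `^ t) &
           (forall eps : R, 0 < eps < 1 ->
              forall y, closure Om y -> eucl_dist y x < A * rx x U * eps ->
                cmod (fU y) < 1 + eps `^ s)]) ->
  exists F : 'rV[R]_n -> R[i], E F /\ peaks_at (closure Om) F x.
Proof.
move=> [_ _ Om_conn _] Kx EK alpha01 s01 t01 A01 C_gt0 peaker.
have [[w [Omw wx]]|no_w] := pselect (exists w, Om w /\ w <> x); last first.
  (* Om is [set x], which is possible only when n = 0. *)
  have K_x : forall y, closure Om y -> y = x.
    apply: closure_sub_set1 => w Omw; apply: contrapT => wx; apply: no_w; by exists w.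
  have [nbhd rx_lt1] := isolated_rel_nbhd Kx K_x.
  have [f [Ef fx _ _ _]] := peaker _ nbhd rx_lt1.
  by exists f; split => //; split => // y Ky []; exact: K_x.
have [M [U [f [Ef S]]]] :=
  exists_peak_sequence Om_conn Kx Omw wx alpha01 s01 t01 A01 C_gt0 peaker.
exists (peak_sum M f); split; first exact: closed_subspace_peak_sum EK Ef S.
by split; [exact: peak_sum_x S Kx | exact: cmod_peak_sum_lt1 S].
Qed.
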